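(* Consider the reaction–diffusion system on $\Omega=[0,\pi]$ with homogeneous Neumann boundary conditions, $$\partial_t f=d_1\Delta f+r\alpha f m(1-f-m)-(1+h)f,\qquad \partial_t m=d_2\Delta m+(1-r)\alpha f m(1-f-m)+(s-1)m,$$ with $0<r<1$, $\alpha>0$, $h\ge0$, $0\le s<1$, $d_1,d_2>0$. At every positive spatially homogeneous steady state $(f^*,m^* )$, the Jacobian $J=(J_{ij})$ of the reaction terms satisfies $J_{11}<0$ and $J_{22}<0$. Consequently, for no choice of $d_1,d_2>0$ do the Turing instability conditions $$J_{11}+J_{22}<0,\quad J_{11}J_{22}-J_{12}J_{21}>0,\quad d_2J_{11}+d_1J_{22}>0,\quad (d_2J_{11}+d_1J_{22})^2-4d_1d_2(J_{11}J_{22}-J_{12}J_{21})>0$$ hold, i.e. the system exhibits no Turing (diffusion-driven) instability.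
   Context: Spatially explicit FHMS mating model without Allee effect; $f,m$ are scaled female/male densities, $r$ primary sex ratio, $h$ scaled harvesting rate, $s$ scaled stocking rate, $d_1,d_2$ diffusion coefficients. *)

From Stdlib Require Import Reals.
From Coquelicot Require Import Coquelicot.
Open Scope R_scope.

Definition reacF (r alpha h : R) (f m : R) : R :=
  r * alpha * f * m * (1 - f - m) - (1 + h) * f.

Definition reacG (r alpha s : R) (f m : R) : R :=
  (1 - r) * alpha * f * m * (1 - f - m) + (s - 1) * m.

Definition J11 r alpha h (f m : R) : R := Derive (fun x => reacF r alpha h x m) f.
Definition J12 r alpha h (f m : R) : R := Derive (fun y => reacF r alpha h f y) m.
Definition J21 r alpha s (f m : R) : R := Derive (fun x => reacG r alpha s x m) f.
Definition J22 r alpha s (f m : R) : R := Derive (fun y => reacG r alpha s f y) m.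

Definition turing_conditions (a b c d d1 d2 : R) : Prop :=
  a + d < 0 /\ a * d - b * c > 0 /\ d2 * a + d1 * d > 0 /\
  (d2 * a + d1 * d) ^ 2 - 4 * d1 * d2 * (a * d - b * c) > 0.

(* At a positive homogeneous steady state (f0, m0) the equations
   F(f0, m0) = 0 and G(f0, m0) = 0 can be divided by f0 resp. m0, giving
     r α m0 (1 - f0 - m0) = 1 + h   and   (1 - r) α f0 (1 - f0 - m0) = 1 - s.
   Substituting these into the closed forms of the diagonal Jacobian
   entries leaves J11 = -r α f0 m0 < 0 and J22 = -(1 - r) α f0 m0 < 0.
   Independently of the model, a Jacobian with negative diagonal can never
   satisfy the third Turing condition d2 J11 + d1 J22 > 0 for positive
   diffusion coefficients, so no Turing instability occurs. *)

From Stdlib Require Import Reals Lra.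
From Coquelicot Require Import Coquelicot.
Open Scope R_scope.

Lemma J11_closed_form r alpha h f m :
  J11 r alpha h f m = r * alpha * m * (1 - f - m) - r * alpha * f * m - (1 + h).
Proof.
  unfold J11, reacF; apply is_derive_unique; auto_derive; auto; ring.
Qed.

Lemma J22_closed_form r alpha s f m :
  J22 r alpha s f m =
    (1 - r) * alpha * f * (1 - f - m) - (1 - r) * alpha * f * m + (s - 1).
Proof.
  unfold J22, reacG; apply is_derive_unique; auto_derive; auto; ring.
Qed.

Lemma reacF_steady_state r alpha h f m :
  0 < f -> reacF r alpha h f m = 0 -> r * alpha * m * (1 - f - m) = 1 + h.
Proof.
  unfold reacF; intros Hf HF.
  apply (Rmult_eq_reg_l f); [lra | apply Rgt_not_eq; exact Hf].
Qed.

Lemma reacG_steady_state r alpha s f m :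
  0 < m -> reacG r alpha s f m = 0 -> (1 - r) * alpha * f * (1 - f - m) = 1 - s.
Proof.
  unfold reacG; intros Hm HG.
  apply (Rmult_eq_reg_l m); [lra | apply Rgt_not_eq; exact Hm].
Qed.

Lemma J11_neg_at_steady_state r alpha h f m :
  0 < r -> 0 < alpha -> 0 < f -> 0 < m -> reacF r alpha h f m = 0 ->
  J11 r alpha h f m < 0.
Proof.
  intros Hr Ha Hf Hm HF.
  rewrite J11_closed_form, (reacF_steady_state _ _ _ _ _ Hf HF).
  assert (0 < r * alpha * f * m) by (repeat apply Rmult_lt_0_compat; lra).
  lra.
Qed.

Lemma J22_neg_at_steady_state r alpha s f m :
  r < 1 -> 0 < alpha -> 0 < f -> 0 < m -> reacG r alpha s f m = 0 ->
  J22 r alpha s f m < 0.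
Proof.
  intros Hr Ha Hf Hm HG.
  rewrite J22_closed_form, (reacG_steady_state _ _ _ _ _ Hm HG).
  assert (0 < (1 - r) * alpha * f * m) by (repeat apply Rmult_lt_0_compat; lra).
  lra.
Qed.

Lemma no_turing_of_negative_diagonal (a b c d d1 d2 : R) :
  a < 0 -> d < 0 -> 0 < d1 -> 0 < d2 -> ~ turing_conditions a b c d d1 d2.
Proof.
  intros Ha Hd H1 H2 [_ [_ [Hdiff _]]].
  assert (d2 * a < 0) by (apply Rmult_pos_neg; assumption).
  assert (d1 * d < 0) by (apply Rmult_pos_neg; assumption).
  lra.
Qed.

Theorem mainTheorem10 (r alpha h s : R) :
  0 < r < 1 -> 0 < alpha -> 0 <= h -> 0 <= s < 1 ->
  forall fs ms : R, 0 < fs -> 0 < ms ->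
  reacF r alpha h fs ms = 0 -> reacG r alpha s fs ms = 0 ->
  J11 r alpha h fs ms < 0 /\ J22 r alpha s fs ms < 0 /\
  (forall d1 d2 : R, 0 < d1 -> 0 < d2 ->
     ~ turing_conditions (J11 r alpha h fs ms) (J12 r alpha h fs ms)
                         (J21 r alpha s fs ms) (J22 r alpha s fs ms) d1 d2).
Proof.
  intros [Hr0 Hr1] Ha _ _ fs ms Hf Hm HF HG.
  assert (HJ11 := J11_neg_at_steady_state _ _ _ _ _ Hr0 Ha Hf Hm HF).
  assert (HJ22 := J22_neg_at_steady_state _ _ _ _ _ Hr1 Ha Hf Hm HG).
  split; [exact HJ11 | split; [exact HJ22 |]].
  intros d1 d2 H1 H2.
  exact (no_turing_of_negative_diagonal _ _ _ _ _ _ HJ11 HJ22 H1 H2).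
Qed.
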